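(* Let $Y_1,\dots,Y_n$ be independent with $Y_i\sim\mathcal N(\mu_i,\sigma^2)$, known $\sigma>0$, and $\mu_1\le\dots\le\mu_n$. Let $1-\alpha\in(0,1)$, $\mathcal J^{full}=\{(j,k)\in\{1,\dots,n\}^2:j\le k\}$ and $\delta=\alpha/(2|\mathcal J^{full}|)=\alpha/(n^2+n)$. Define $$L^\alpha_{\mathbf Y,i}=\sup_{(j,k)\in\mathcal J^{full}:\mu_i\ge\mu_k}\Big(Z_{j:k}-\frac{\sigma\,\Phi^{-1}(1-\delta)}{\sqrt{k-j+1}}\Big),\quad U^\alpha_{\mathbf Y,i}=\inf_{(j,k)\in\mathcal J^{full}:\mu_i\le\mu_j}\Big(Z_{j:k}-\frac{\sigma\,\Phi^{-1}(\delta)}{\sqrt{k-j+1}}\Big),$$ with $Z_{j:k}=\frac1{k-j+1}\sum_{i=j}^kY_i$, and the Yang--Barber bounds $$L^{\alpha,YB}_{\mathbf Y,i}=\sup_{(j,k)\in\mathcal J^{full}:\mu_i\ge\mu_k}\Big(Z^{Iso}_{j:k}-\frac{\sqrt{2\sigma^2\log(1/\delta)}}{\sqrt{k-j+1}}\Big),\quad U^{\alpha,YB}_{\mathbf Y,i}=\inf_{(j,k)\in\mathcal J^{full}:\mu_i\le\mu_j}\Big(Z^{Iso}_{j:k}+\frac{\sqrt{2\sigma^2\log(1/\delta)}}{\sqrt{k-j+1}}\Big),$$ with $Z^{Iso}_{j:k}=\frac1{k-j+1}\sum_{i=j}^k\widehat\mu^{Iso}_i$. Then $L^\alpha_{\mathbf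 Y,i}\ge L^{\alpha,YB}_{\mathbf Y,i}$ and $U^\alpha_{\mathbf Y,i}\le U^{\alpha,YB}_{\mathbf Y,i}$ for all $1\le i\le n$.
   Context: $\Phi^{-1}(\delta)$ is the $\delta$-quantile of the standard normal distribution. $\widehat{\boldsymbol\mu}^{Iso}=(\widehat\mu^{Iso}_1,\dots,\widehat\mu^{Iso}_n)$ is the (unweighted) isotonic regression of $\mathbf Y$: the minimizer of $\sum_{i=1}^n(Y_i-m_i)^2$ over $\mathbf m\in\mathbb R^n$ with $m_1\le\dots\le m_n$. (The bounds $L^\alpha,U^\alpha$ are those of the paper's normal-case calibration band with volumes $v_i=1$ and dispersion $\varphi=\sigma^2$.) *)

From HB Require Import structures.
From mathcomp Require Import all_boot all_order all_algebra.
From mathcomp Require Import all_classical all_reals all_analysis.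
Set Implicit Arguments. Unset Strict Implicit. Unset Printing Implicit Defensive.
Import Order.TTheory GRing.Theory Num.Theory.
Local Open Scope classical_set_scope.
Local Open Scope ring_scope.

Section Defs.
Variables (R : realType) (n : nat).

Definition std_normal_cdf (x : R) : R := fine (normal_prob 0 1 `]-oo, x]).

Definition std_normal_quantile (d : R) : R := inf [set x | d <= std_normal_cdf x].

Definition nondecr (m : 'I_n -> R) : Prop :=
  forall i j : 'I_n, (i <= j)%N -> m i <= m j.

Definition blockmean (v : 'I_n -> R) (j k : 'I_n) : R :=
  (\sum_(l < n | (j <= l <= k)%N) v l) / (k - j + 1)%:R.

Definition is_isoreg (y m : 'I_n -> R) : Prop :=
  nondecr m /\
  forall m' : 'I_n -> R, nondecr m' ->
    \sum_(l < n) (y l - m l) ^+ 2 <= \sum_(l < n) (y l - m' l) ^+ 2.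

Definition delta (alpha : R) : R := alpha / (n ^ 2 + n)%:R.

Definition Jfull : set ('I_n * 'I_n) := [set p : 'I_n * 'I_n | (p.1 <= p.2)%N].

Definition width (p : 'I_n * 'I_n) : R := Num.sqrt (p.2 - p.1 + 1)%:R.

Definition L_band (y mu : 'I_n -> R) (sigma alpha : R) (i : 'I_n) : R :=
  sup [set blockmean y p.1 p.2
              - sigma * std_normal_quantile (1 - delta alpha) / width p
      | p in Jfull `&` [set p : 'I_n * 'I_n | mu p.2 <= mu i]].

Definition U_band (y mu : 'I_n -> R) (sigma alpha : R) (i : 'I_n) : R :=
  inf [set blockmean y p.1 p.2
              - sigma * std_normal_quantile (delta alpha) / width p
      | p in Jfull `&` [set p : 'I_n * 'I_n | mu i <= mu p.1]].

Definition L_YB (muiso mu : 'I_n -> R) (sigma alpha : R) (i : 'I_n) : R :=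
  sup [set blockmean muiso p.1 p.2
              - Num.sqrt (2 * sigma ^+ 2 * ln (delta alpha)^-1) / width p
      | p in Jfull `&` [set p : 'I_n * 'I_n | mu p.2 <= mu i]].

Definition U_YB (muiso mu : 'I_n -> R) (sigma alpha : R) (i : 'I_n) : R :=
  inf [set blockmean muiso p.1 p.2
              + Num.sqrt (2 * sigma ^+ 2 * ln (delta alpha)^-1) / width p
      | p in Jfull `&` [set p : 'I_n * 'I_n | mu i <= mu p.1]].

End Defs.

From HB Require Import structures.
From mathcomp Require Import all_boot all_order all_algebra.
From mathcomp Require Import all_classical all_reals all_analysis.
From mathcomp Require Import measurable_realfun ring lra zify.
Import Order.TTheory GRing.Theory Num.Theory.
Set Implicit Arguments. Unset Strict Implicit. Unset Printing Implicit Defensive.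
Local Open Scope ring_scope.

(* Gaussian tails give Phi^-1(1 - delta) <= sqrt (2 log (1/delta)) and
   -Phi^-1(delta) <= sqrt (2 log (1/delta)), so it suffices to dominate each
   penalized block mean of the isotonic fit, Z^Iso_{j:k} - c / sqrt (k - j + 1)
   with c >= 0, by a penalized block mean Z_{a:k} - c / sqrt (k - a + 1) of the
   data with the same right end k (the upper bound follows by reversing and
   negating the sequence).
   If a starts a block of the fit, the tail sum of the fit over [a, k] is at most
   that of the data: otherwise lowering the fit by a small amount on [a, k] keeps
   it nondecreasing and decreases the squared loss.  If [a, b) is the block
   containing j, the tail mean of the fit from any x in [a, b] is v + D w^2 with
   w = 1 / sqrt (k - x + 1) and a constant D >= 0, so the penalized tail mean
   v + D w^2 - c w is convex in w and is largest at one of the block starts a, b. *)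

Lemma exists_small_descent (R : realFieldType) (S c e0 : R) :
  S < 0 -> 0 <= c -> 0 < e0 ->
  exists2 e, 0 < e <= e0 & 2 * e * S + e ^+ 2 * c < 0.
Proof.
move=> S_lt0 c_ge0 e0_gt0; set e := Order.min e0 (- S / (c + 1)).
have c1_gt0 : 0 < c + 1 by lra.
have e_gt0 : 0 < e by rewrite lt_min e0_gt0 divr_gt0 // oppr_gt0.
have ec : e * (c + 1) <= - S by rewrite -ler_pdivlMr // ge_min lexx orbT.
exists e; first by rewrite e_gt0 ge_min lexx.
nra.
Qed.

Lemma le_quadratic_endpoints (R : realFieldType) (D C wa w wb : R) :
  0 <= D -> wa <= w <= wb ->
  D * w ^+ 2 - C * w <= D * wa ^+ 2 - C * wa \/
  D * w ^+ 2 - C * w <= D * wb ^+ 2 - C * wb.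
Proof.
move=> D_ge0 /andP[wa_le wb_ge].
have [C_le | C_gt] := lerP C (D * (w + wa)); [right | left].
- have -> : D * wb ^+ 2 - C * wb = D * w ^+ 2 - C * w + (wb - w) * (D * (wb + w) - C)
    by ring.
  rewrite lerDl; apply: mulr_ge0; first by rewrite subr_ge0.
  by rewrite subr_ge0 (le_trans C_le) // ler_wpM2l //; lra.
- have -> : D * wa ^+ 2 - C * wa = D * w ^+ 2 - C * w + (w - wa) * (C - D * (w + wa))
    by ring.
  by rewrite lerDl; apply: mulr_ge0; rewrite subr_ge0 // ltW.
Qed.

Lemma ler_invsqrt_nat (R : rcfType) (p q : nat) : (0 < p <= q)%N ->
  (Num.sqrt (q%:R : R))^-1 <= (Num.sqrt (p%:R : R))^-1.
Proof.
case/andP=> p_gt0 pq; have q_gt0 := leq_trans p_gt0 pq.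
by rewrite lef_pV2 ?posrE ?sqrtr_gt0 ?ltr0n // ler_sqrt ?ler_nat ?ltr0n.
Qed.

Section PenalizedTailMeans.
Variables (R : rcfType) (C : R).

Definition pen_tail_mean (F : nat -> R) (k x : nat) : R :=
  (\sum_(x <= l < k.+1) F l) / (k - x + 1)%:R - C / Num.sqrt (k - x + 1)%:R.

Definition block_start (F : nat -> R) (x : nat) := forall l, (l < x)%N -> F l < F x.

Lemma pen_tail_meanE (F : nat -> R) (k x : nat) (v D : R) :
  \sum_(x <= l < k.+1) F l = v * (k - x + 1)%:R + D ->
  pen_tail_mean F k x =
  v + D * (Num.sqrt (k - x + 1)%:R)^-1 ^+ 2 - C * (Num.sqrt (k - x + 1)%:R)^-1.
Proof.
by move=> tailE; rewrite /pen_tail_mean tailE exprVn sqr_sqrtr ?ler0n // mulrDl mulfK.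
Qed.

Lemma tail_sum_const_prefix (F : nat -> R) (v : R) (x b k : nat) :
  (x <= b <= k.+1)%N -> (x <= k)%N -> (forall l, (x <= l < b)%N -> F l = v) ->
  \sum_(x <= l < k.+1) F l = v * (k - x + 1)%:R + \sum_(b <= l < k.+1) (F l - v).
Proof.
move=> /andP[xb bk] xk F_eq.
rewrite -(eq_big_nat _ _ (fun l _ => subrKC v (F l))) big_split sumr_const_nat /=.
rewrite (@big_cat_nat _ _ _ b) //= big_nat_cond big1 ?add0r; last first.
  by move=> l /andP[/F_eq -> _]; rewrite subrr.
by rewrite mulr_natr; congr (_ *+ _ + _); lia.
Qed.

Variables (M : nat -> R) (k : nat).
Hypothesis M_nondecr : forall l1 l2, (l1 <= l2 <= k)%N -> M l1 <= M l2.

Lemma exists_block_start_le (j : nat) : (j <= k)%N ->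
  exists a, [/\ (a <= j)%N, block_start M a & forall l, (a <= l <= j)%N -> M l = M j].
Proof.
move=> jk; have [a /eqP Ma a_min] := ex_minnP (ex_intro (fun l => M l == M j) j (eqxx _)).
have aj : (a <= j)%N by apply: a_min.
have M_le_j l : (l <= j)%N -> M l <= M j by move=> lj; rewrite M_nondecr ?lj.
exists a; split => // [l la | l /andP[al lj]].
  rewrite lt_neqAle Ma M_le_j ?andbT; last exact: leq_trans (ltnW la) aj.
  by apply/negP => /a_min; rewrite leqNgt la.
by apply: le_anti; rewrite M_le_j // -Ma M_nondecr // al (leq_trans lj).
Qed.

Lemma exists_block_start_gt (j : nat) : (j <= k)%N ->
  exists b, [/\ (j < b <= k.+1)%N, forall l, (j < l < b)%N -> M l = M j
              & (b <= k)%N -> block_start M b].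
Proof.
move=> jk; pose P l := (j < l)%N && ((k < l)%N || (M l != M j)).
have Pk1 : P k.+1 by rewrite /P ltnS jk ltnSn.
have [b /andP[jb Pb] b_min] := ex_minnP (ex_intro P _ Pk1).
have bk1 : (b <= k.+1)%N by apply: b_min.
have M_eq l : (j < l < b)%N -> M l = M j.
  move=> /andP[jl lb]; apply/eqP; apply: contraTT lb => Ml.
  by rewrite -leqNgt b_min // /P jl Ml orbT.
exists b; split => [|//|bk l lb]; first by rewrite jb.
have Mjb : M j < M b.
  by move: Pb; rewrite ltnNge bk /= lt_neqAle eq_sym => ->; rewrite M_nondecr // bk ltnW.
have [lj | jl] := leqP l j; last by rewrite M_eq ?jl.
by apply: le_lt_trans Mjb; rewrite M_nondecr // lj.
Qed.

Lemma exists_block_start_pen_tail_mean_ge (j : nat) : 0 <= C -> (j <= k)%N ->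
  exists2 x, (x <= k)%N /\ block_start M x & pen_tail_mean M k j <= pen_tail_mean M k x.
Proof.
move=> C_ge0 jk; set v := M j.
have [a [aj a_start Ma]] := exists_block_start_le jk.
have [b [/andP[jb bk1] Mb b_start]] := exists_block_start_gt jk.
set D := \sum_(b <= l < k.+1) (M l - v).
have D_ge0 : 0 <= D.
  rewrite /D big_nat_cond; apply: sumr_ge0 => l /andP[/andP[bl lk] _].
  by rewrite subr_ge0 M_nondecr //; lia.
have tailE x : (a <= x <= b)%N -> (x <= k)%N ->
    \sum_(x <= l < k.+1) M l = v * (k - x + 1)%:R + D.
  move=> /andP[ax xb] xk; apply: tail_sum_const_prefix; rewrite ?xb //.
  by move=> l /andP[xl lb]; have [lj | jl] := leqP l j; [apply: Ma | apply: Mb]; lia.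
pose w x := (Num.sqrt ((k - x + 1)%:R : R))^-1.
have penE x : (a <= x <= b)%N -> (x <= k)%N ->
    pen_tail_mean M k x = v + D * w x ^+ 2 - C * w x.
  by move=> xab /(tailE _ xab); apply: pen_tail_meanE.
have ak : (a <= k)%N := leq_trans aj jk.
have a_in : (a <= a <= b)%N by rewrite leqnn (ltnW (leq_ltn_trans aj jb)).
have j_in : (a <= j <= b)%N by rewrite aj ltnW.
have b_in : (a <= b <= b)%N by rewrite leqnn (ltnW (leq_ltn_trans aj jb)).
have w_aj : w a <= w j by apply: ler_invsqrt_nat; lia.
have [bk | kb] := leqP b k.
- have w_ajb : w a <= w j <= w b by rewrite w_aj; apply: ler_invsqrt_nat; lia.
  have [le_a | le_b] := le_quadratic_endpoints C D_ge0 w_ajb.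
  + exists a => //.
    by rewrite !penE //; lra.
  + exists b; first by split => //; exact: b_start.
    by rewrite !penE //; lra.
- have D0 : D = 0 by rewrite /D big_geq.
  exists a => //.
  by rewrite !penE // D0 !mul0r !addr0 lerD2l lerN2 ler_wpM2l.
Qed.

End PenalizedTailMeans.

Definition ord_ext (V : nmodType) n (v : 'I_n -> V) (l : nat) : V := oapp v 0 (insub l).

Lemma ord_extE (V : nmodType) n (v : 'I_n -> V) (i : 'I_n) : ord_ext v i = v i.
Proof. by rewrite /ord_ext valK. Qed.

Lemma sum_ord_ext (V : nmodType) n (v : 'I_n -> V) (j k : 'I_n) :
  \sum_(l < n | (j <= l <= k)%N) v l = \sum_(j <= l < k.+1) ord_ext v l.
Proof.
rewrite (big_nat_widen _ _ n) ?ltn_ord // (big_nat_widenl _ 0) // big_mkord.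
by apply: eq_big => [l | l _]; [rewrite /= andbC | rewrite ord_extE].
Qed.

Lemma blockmean_pen_tail_mean (R : realType) n (v : 'I_n -> R) (C : R) (j k : 'I_n) :
  blockmean v j k - C / width R (j, k) = pen_tail_mean C (ord_ext v) k j.
Proof. by rewrite /blockmean sum_ord_ext. Qed.

Section IsotonicRegression.
Variables (R : realType) (n : nat) (y m : 'I_n -> R).
Hypothesis iso : is_isoreg y m.

Lemma isoreg_block_sum_le (a k : 'I_n) :
  (forall l : 'I_n, (l < a)%N -> m l < m a) ->
  \sum_(l < n | (a <= l <= k)%N) m l <= \sum_(l < n | (a <= l <= k)%N) y l.
Proof.
move=> a_start; have [m_nondecr m_opt] := iso.
set P := fun l : 'I_n => (a <= l <= k)%N.
rewrite -subr_ge0 -sumrB leNgt; apply/negP => S_lt0.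
set S := \sum_(l | P l) (y l - m l) in S_lt0.
set c := \sum_(l | P l) (1 : R).
set e0 := \big[Order.min/1]_(l : 'I_n | (l < a)%N) (m a - m l).
have e0_gt0 : 0 < e0 by apply: lt_bigmin => // l /a_start; rewrite subr_gt0.
have gap (l : 'I_n) : (l < a)%N -> m l <= m a - e0.
  by move=> la; rewrite lerBrDl -lerBrDr; exact: bigmin_le_cond.
have c_ge0 : 0 <= c by apply: sumr_ge0 => l _; exact: ler01.
have [e /andP[e_gt0 e_le] descent] := exists_small_descent S_lt0 c_ge0 e0_gt0.
pose m' l := m l - (if P l then e else 0).
have m'_nondecr : nondecr m'.
  move=> i j ij; rewrite /m'.
  case: (boolP (P i)) => Pi; case: (boolP (P j)) => Pj.
  - by rewrite lerD2r m_nondecr.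
  - by have := m_nondecr _ _ ij; lra.
  - have ia : (i < a)%N by move: Pi Pj; rewrite /P; lia.
    by have := gap _ ia; have := m_nondecr a j (proj1 (andP Pj)); lra.
  - by rewrite lerD2r m_nondecr.
have sq_expand : \sum_(l < n) (y l - m' l) ^+ 2 =
    \sum_(l < n) (y l - m l) ^+ 2 + (2 * e * S + e ^+ 2 * c).
  have -> : 2 * e * S + e ^+ 2 * c = \sum_(l | P l) (2 * e * (y l - m l) + e ^+ 2).
    rewrite big_split /= !mulr_sumr; congr (_ + _).
    by apply: eq_bigr => l _; rewrite mulr1.
  rewrite [X in _ = _ + X]big_mkcond -big_split; apply: eq_bigr => l _ /=.
  by rewrite /m'; case: ifP => _; ring.
by have := m_opt m' m'_nondecr; rewrite sq_expand leNgt gtrDl descent.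
Qed.

Lemma isoreg_pen_blockmean_le (C : R) (j k : 'I_n) : 0 <= C -> (j <= k)%N ->
  exists2 a : 'I_n, (a <= k)%N &
    blockmean m j k - C / width R (j, k) <= blockmean y a k - C / width R (a, k).
Proof.
move=> C_ge0 jk.
have m_nondecr l1 l2 : (l1 <= l2 <= k)%N -> ord_ext m l1 <= ord_ext m l2.
  case/andP=> l12 l2k; have l2n : (l2 < n)%N := leq_ltn_trans l2k (ltn_ord k).
  have l1n : (l1 < n)%N := leq_ltn_trans l12 l2n.
  rewrite -[l1]/(nat_of_ord (Ordinal l1n)) -[l2]/(nat_of_ord (Ordinal l2n)) !ord_extE.
  exact: iso.1.
have [x [xk x_start] le_x] := exists_block_start_pen_tail_mean_ge m_nondecr C_ge0 jk.
have xn : (x < n)%N := leq_ltn_trans xk (ltn_ord k).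
exists (Ordinal xn) => //; rewrite !blockmean_pen_tail_mean; apply: le_trans le_x _.
rewrite /pen_tail_mean lerD2r ler_wpM2r ?invr_ge0 //.
rewrite -(sum_ord_ext m (Ordinal xn)) -(sum_ord_ext y (Ordinal xn)).
apply: isoreg_block_sum_le => l lx; have := x_start l lx.
by rewrite -[x]/(nat_of_ord (Ordinal xn)) !ord_extE.
Qed.

Lemma isoreg_rev : is_isoreg (fun l => - y (rev_ord l)) (fun l => - m (rev_ord l)).
Proof.
have [m_nondecr m_opt] := iso.
have rev_nondecr (f : 'I_n -> R) : nondecr f -> nondecr (fun l => - f (rev_ord l)).
  by move=> f_nondecr i j ij; rewrite lerN2 f_nondecr //= leq_sub2l // ltnS.
split => [|m' /rev_nondecr/m_opt le_m]; first exact: rev_nondecr.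
have -> : \sum_(l < n) (- y (rev_ord l) - - m (rev_ord l)) ^+ 2 =
          \sum_(l < n) (y l - m l) ^+ 2.
  by rewrite (reindex_inj rev_ord_inj); apply: eq_bigr => l _ /=; rewrite rev_ordK; ring.
have -> : \sum_(l < n) (- y (rev_ord l) - m' l) ^+ 2 =
          \sum_(l < n) (y l - - m' (rev_ord l)) ^+ 2.
  by rewrite (reindex_inj rev_ord_inj); apply: eq_bigr => l _ /=; rewrite rev_ordK; ring.
exact: le_m.
Qed.

End IsotonicRegression.

Lemma blockmean_rev (R : realType) n (v : 'I_n -> R) (a b : 'I_n) :
  blockmean (fun l => - v (rev_ord l)) a b = - blockmean v (rev_ord b) (rev_ord a).
Proof.
rewrite /blockmean -mulNr -sumrN (reindex_inj rev_ord_inj) /=.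
congr (_ / _%:R); last by have := ltn_ord a; have := ltn_ord b; lia.
apply: eq_big => [l | l _]; last by rewrite rev_ordK.
have := ltn_ord a; have := ltn_ord b; have := ltn_ord l => * /=.
apply/idP/idP => /andP[? ?]; apply/andP; split; lia.
Qed.

Lemma width_rev (R : realType) n (a b : 'I_n) :
  width R (a, b) = width R (rev_ord b, rev_ord a).
Proof.
by rewrite /width /=; congr (Num.sqrt _%:R); have := ltn_ord a; have := ltn_ord b; lia.
Qed.

Lemma isoreg_pen_blockmean_ge (R : realType) n (y m : 'I_n -> R) (C : R) (j k : 'I_n) :
  is_isoreg y m -> 0 <= C -> (j <= k)%N ->
  exists2 b : 'I_n, (j <= b)%N &
    blockmean y j b + C / width R (j, b) <= blockmean m j k + C / width R (j, k).
Proof.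
move=> iso C_ge0 jk.
have jk_rev : (rev_ord k <= rev_ord j)%N by rewrite /= leq_sub2l // ltnS.
have [a ak le_a] := isoreg_pen_blockmean_le (isoreg_rev iso) C_ge0 jk_rev.
exists (rev_ord a); first by move: ak; have := ltn_ord a; have := ltn_ord j; rewrite /=; lia.
move: le_a; rewrite !blockmean_rev !rev_ordK (width_rev _ (rev_ord k)) (width_rev _ a).
by rewrite !rev_ordK; lra.
Qed.

Lemma normal_prob_le_expR (R : realType) (x : R) (A : set R) : measurable A ->
  (forall u, A u -> 0 <= x * (u - x)) ->
  (normal_prob 0 1 A <= (expR (- x ^+ 2 / 2))%:E)%E.
Proof.
move=> mA A_x.
have pdf_mA c : measurable_fun A (EFin \o normal_pdf c 1 : R -> \bar R).
  by apply/measurable_EFinP; apply: measurable_funTS; exact: measurable_normal_pdf.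
(* exponential tilting: the N(0,1) density is e^{-x^2/2} e^{-x(u-x)} times the
   N(x,1) density *)
have pdf_le u : A u -> normal_pdf 0 1 u <= expR (- x ^+ 2 / 2) * normal_pdf x 1 u.
  move=> /A_x xu; rewrite !normal_pdfE // mulrCA ler_wpM2l ?normal_peak_ge0 //.
  rewrite /normal_fun -expRD ler_expR expr1n subr0 -mulNr -mulrDl ler_pM2r //; nra.
apply: (@le_trans _ _ (\int[lebesgue_measure]_(u in A)
    ((expR (- x ^+ 2 / 2))%:E * (normal_pdf x 1 u)%:E))%E).
  apply: ge0_le_integral; first by [].
  - by move=> u _; rewrite lee_fin normal_pdf_ge0.
  - exact: pdf_mA.
  - exact: emeasurable_funM (measurable_cst _) (pdf_mA x).
  - by move=> u /pdf_le; rewrite lee_fin.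
rewrite ge0_integralZl_EFin //; [|by move=> u _; rewrite lee_fin normal_pdf_ge0|exact: pdf_mA].
rewrite -[X in (_ <= X)%E]mule1 lee_pmul2l ?lte_fin ?expR_gt0 //.
exact: (probability_le1 (normal_prob x 1)).
Qed.

Lemma std_normal_cdf_le_expR (R : realType) (x : R) : x <= 0 ->
  std_normal_cdf x <= expR (- x ^+ 2 / 2).
Proof.
move=> x_le0; rewrite /std_normal_cdf.
have : (normal_prob 0 1 `]-oo, x] <= (expR (- x ^+ 2 / 2))%:E)%E.
  by apply: normal_prob_le_expR => [|u /=]; [exact: measurable_itv | rewrite in_itv /=; nra].
by case: (normal_prob 0 1 `]-oo, x]) => [r||] //=.
Qed.

Lemma std_normal_cdf_ge (R : realType) (t : R) : 0 <= t ->
  1 - expR (- t ^+ 2 / 2) <= std_normal_cdf t.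
Proof.
move=> t_ge0.
have : (1 - normal_prob 0 1 `]-oo, t] <= (expR (- t ^+ 2 / 2))%:E)%E.
  rewrite -probability_setC // setCitvl.
  apply: normal_prob_le_expR => [|u /=]; first exact: measurable_itv.
  by rewrite in_itv /= andbT; nra.
have : (normal_prob 0 1 `]-oo, t] <= 1)%E by exact: probability_le1.
have := measure_ge0 (normal_prob 0 1) `]-oo, t].
rewrite /std_normal_cdf; case: (normal_prob 0 1 `]-oo, t]) => // r _ _.
by rewrite -EFinB lee_fin /= => ?; lra.
Qed.

Lemma std_normal_quantile_bounds (R : realType) (d : R) : 0 < d <= 1 / 2 ->
  std_normal_quantile (1 - d) <= Num.sqrt (2 * ln d^-1) /\
  - Num.sqrt (2 * ln d^-1) <= std_normal_quantile d.
Proof.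
case/andP=> d_gt0 d_le; set t := Num.sqrt (2 * ln d^-1).
have ln_ge0 : 0 <= ln d^-1 by rewrite ln_ge0 // invf_ge1 //; lra.
have t_ge0 : 0 <= t by exact: sqrtr_ge0.
have expR_t : expR (- t ^+ 2 / 2) = d.
  by rewrite sqr_sqrtr ?mulr_ge0 // lnV ?posrE // mulrN opprK mulrC mulKf // lnK.
have cdf_lt x : x < - t -> std_normal_cdf x < d.
  move=> x_lt; apply: le_lt_trans (std_normal_cdf_le_expR (_ : x <= 0)) _; first lra.
  by rewrite -expR_t ltr_expR; nra.
have cdf_t := std_normal_cdf_ge t_ge0; rewrite expR_t in cdf_t.
split.
- apply: ge_inf => //; exists (- t) => x /= d_le_x.
  by rewrite leNgt; apply/negP => /cdf_lt; lra.
- apply: lb_le_inf; first by exists t => /=; lra.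
  by move=> x /= d_le_x; rewrite leNgt; apply/negP => /cdf_lt; lra.
Qed.

Local Open Scope classical_set_scope.

Lemma width_gt0 (R : realType) n (p : 'I_n * 'I_n) : 0 < width R p.
Proof. by rewrite sqrtr_gt0 ltr0n addn1. Qed.

Lemma sup_pen_blockmean_le (R : realType) n (y m : 'I_n -> R) (P : 'I_n -> Prop)
    (k0 : 'I_n) (cy cm : R) :
  is_isoreg y m -> P k0 -> 0 <= cm -> cy <= cm ->
  sup [set blockmean m p.1 p.2 - cm / width R p | p in @Jfull n `&` [set p | P p.2]] <=
  sup [set blockmean y p.1 p.2 - cy / width R p | p in @Jfull n `&` [set p | P p.2]].
Proof.
move=> iso Pk0 cm_ge0 cy_le.
have k0_in : (@Jfull n `&` [set p | P p.2]) (k0, k0) by split; rewrite /Jfull /=.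
apply: sup_le; last split.
- move=> _ [[j k] [/= jk Pk] <-].
  have [a ak le_a] := isoreg_pen_blockmean_le iso cm_ge0 jk.
  apply/downP; exists (blockmean y a k - cy / width R (a, k)); first by exists (a, k).
  by apply: le_trans le_a _; rewrite lerD2l lerN2 ler_wpM2r // invr_ge0 ltW // width_gt0.
- by eexists; exists (k0, k0).
- by eexists; exists (k0, k0).
- exists (\big[Order.max/0]_p (blockmean y p.1 p.2 - cy / width R p)) => _ [p _ <-].
  exact: le_bigmax.
Qed.

Lemma inf_pen_blockmean_le (R : realType) n (y m : 'I_n -> R) (P : 'I_n -> Prop)
    (j0 : 'I_n) (cy cm : R) :
  is_isoreg y m -> P j0 -> 0 <= cm -> - cy <= cm ->
  inf [set blockmean y p.1 p.2 - cy / width R p | p in @Jfull n `&` [set p | P p.1]] <=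
  inf [set blockmean m p.1 p.2 + cm / width R p | p in @Jfull n `&` [set p | P p.1]].
Proof.
move=> iso Pj0 cm_ge0 cy_le.
have j0_in : (@Jfull n `&` [set p | P p.1]) (j0, j0) by split; rewrite /Jfull /=.
apply: lb_le_inf; first by eexists; exists (j0, j0).
move=> _ [[j k] [/= jk Pj] <-].
have [b jb le_b] := isoreg_pen_blockmean_ge iso cm_ge0 jk.
apply: le_trans (le_trans _ le_b).
  apply: ge_inf; last by exists (j, b).
  exists (\big[Order.min/0]_p (blockmean y p.1 p.2 - cy / width R p)) => _ [p _ <-].
  exact: bigmin_le.
by rewrite lerD2l -mulNr ler_wpM2r // invr_ge0 ltW // width_gt0.
Qed.

Lemma delta_gt0_le_half (R : realType) n (alpha : R) :
  (0 < n)%N -> 0 < alpha < 1 -> 0 < delta n alpha <= 1 / 2.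
Proof.
move=> n_gt0 /andP[alpha_gt0 alpha_lt1].
have N2 : (2 : R) <= (n ^ 2 + n)%:R by rewrite (ler_nat R 2); nia.
have N_gt0 : (0 : R) < (n ^ 2 + n)%:R by lra.
by rewrite divr_gt0 //= ler_pdivrMr //; lra.
Qed.

Theorem theorem5p4 (R : realType) (n : nat) (mu y muiso : 'I_n -> R)
  (sigma alpha : R) :
  0 < sigma -> 0 < 1 - alpha < 1 ->
  nondecr mu ->
  is_isoreg y muiso ->
  forall i : 'I_n,
    L_YB muiso mu sigma alpha i <= L_band y mu sigma alpha i /\
    U_band y mu sigma alpha i <= U_YB muiso mu sigma alpha i.
Proof.
(* the monotonicity of mu is not needed: each index set only constrains the end of
   the block that the comparison keeps fixed *)
move=> sigma_gt0 alpha_bounds _ iso i.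
have delta_bounds : 0 < delta n alpha <= 1 / 2.
  by apply: delta_gt0_le_half; [exact: leq_ltn_trans (ltn_ord i) | lra].
have [q_hi q_lo] := std_normal_quantile_bounds delta_bounds.
set t := Num.sqrt (2 * ln (delta n alpha)^-1) in q_hi q_lo.
have t_ge0 : 0 <= t := sqrtr_ge0 _.
have sigma_t : Num.sqrt (2 * sigma ^+ 2 * ln (delta n alpha)^-1) = sigma * t.
  by rewrite -mulrA mulrCA sqrtrM ?sqr_ge0 // sqrtr_sqr gtr0_norm.
split.
- rewrite /L_YB /L_band sigma_t.
  apply: (sup_pen_blockmean_le (P := fun k => mu k <= mu i) (k0 := i)) => //.
    exact: mulr_ge0 (ltW sigma_gt0) t_ge0.
  by rewrite ler_wpM2l // ltW.
- rewrite /U_YB /U_band sigma_t.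
  apply: (inf_pen_blockmean_le (P := fun j => mu i <= mu j) (j0 := i)) => //.
    exact: mulr_ge0 (ltW sigma_gt0) t_ge0.
  by rewrite -mulrN ler_wpM2l ?(ltW sigma_gt0) // lerNl.
Qed.
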